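(* Let $H$, its Coxeter generators $s_1,\dots,s_6,s_{3'}$, $G$, the cosets $\pm v(i,j)$, and $H_1$ with its Coxeter generators $a_1,\dots,a_5,a_{1'}$ be as in the context, and define $Q=\langle s_1,s_2,s_3,s_4,s_5,s_{3'}\rangle\subset H$. Then: (a) $Q$ is isomorphic to $H_1$ via the map $m$ determined on generators by $m(s_k)=a_{6-k}$ for $1\le k\le 5$ and $m(s_{3'})=a_{1'}$ (so $Q\cong W(D_6)$); (b) the action of $Q$ by right multiplication on the 56 right cosets of $G$ in $H$ has exactly three orbits, namely $\mathscr{O}_1=\{v(0,j):2\le j\le7\}\cup\{-v(1,j):2\le j\le 7\}$, $\mathscr{O}_2=\{v(1,j):2\le j\le7\}\cup\{-v(0,j):2\le j\le 7\}$, $\mathscr{O}_3=\{\pm v(i,j): (i,j)=(0,1)\text{ or } 2\le i<j\le 7\}$.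
   Context: Let $W=\{(a,b,c,d,e,f,g,h)^T\in\mathbb{C}^8: 2+3a=b+c+d+e+f+g+h\}$. A transposition $(ij)$ is identified with the permutation matrix swapping coordinates $i$ and $j$. Let $X\in GL(8,\mathbb{C})$ be the matrix whose rows are $(\tfrac12,\tfrac12,-\tfrac12,-\tfrac12,-\tfrac12,\tfrac12,\tfrac12,\tfrac12)$, $e_2$, $(-\tfrac12,\tfrac12,\tfrac12,-\tfrac12,-\tfrac12,\tfrac12,\tfrac12,\tfrac12)$, $(-\tfrac12,\tfrac12,-\tfrac12,\tfrac12,-\tfrac12,\tfrac12,\tfrac12,\tfrac12)$, $(-\tfrac12,\tfrac12,-\tfrac12,-\tfrac12,\tfrac12,\tfrac12,\tfrac12,\tfrac12)$, $e_6,e_7,e_8$, and $Y$ the matrix with rows $(-1,2,0,0,0,0,0,0)$, $(-1,1,1,0,0,0,0,0)$, $(0,1,0,0,0,0,0,0)$, and $-e_1+e_2+e_r$ for $r=4,\dots,8$. Let $H=\langle(23),(34),(45),(56),(67),(78),X,Y\rangle\cong W(E_7)$ with Coxeter generators $s_1=Y(23)$, $s_2=(34)$, $s_3=(45)$, $s_4=(56)$, $s_5=(67)$, $s_6=(78)$, $s_{3'}=X$, and $G=\langle s_2,\dots,s_6,s_{3'}\rangle$. For $\vec w\in W$ put $x_0=b,x_1=h,x_2=g,x_3=f,x_4=e,x_5=d,x_6=c,x_7=a$. The right coset $G\alpha$ is determined by the second entry of $\alpha\vec w$ (as an affine function of $\vec w$); $v(i,j)$ ($0\le i<j\le7$) is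 the coset for which this entry is $x_i+x_j-x_7$, and $-v(i,j)$ the coset for which it is $1+x_7-x_i-x_j$; these are all 56 cosets. Let $V=\{(A,\dots,G)^T\in\mathbb{C}^7:E+F+G-A-B-C-D=1\}$, let $X_1\in GL(7,\mathbb{C})$ have rows $e_1$, $-e_3+e_5$, $-e_2+e_5$, $e_4$, $e_5$, $-e_2-e_3+e_5+e_6$, $-e_2-e_3+e_5+e_7$, and let $H_1=\langle(12),(23),(34),(56),(67),X_1\rangle\subset GL(7,\mathbb{C})$ ($\cong W(D_6)$), with Coxeter generators $a_1=(23),a_2=(34),a_3=X_1,a_4=(56),a_5=(67),a_{1'}=(14)$. *)

From HB Require Import structures.
From mathcomp Require Import all_boot all_order all_algebra all_fingroup all_field.
Set Implicit Arguments. Unset Strict Implicit. Unset Printing Implicit Defensive.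
Import GRing.Theory Num.Theory.
Local Open Scope ring_scope.

(* All matrices are over the complex numbers, modelled by algC. Indices are
   0-based: paper coordinate k (1..n) is ordinal k-1. Matrices act on column
   vectors. *)

Notation M8 := 'M[algC]_8.
Notation M7 := 'M[algC]_7.

Definition mx_rows (n : nat) (l : seq (seq algC)) : 'M[algC]_n :=
  \matrix_(i < n, j < n) nth 0 (nth [::] l i) j.

(* permutation matrix of the transposition swapping paper coordinates i and j
   (1-based) *)
Definition tr8 (i j : nat) : M8 := perm_mx (tperm (inord i.-1 : 'I_8) (inord j.-1)).
Definition tr7 (i j : nat) : M7 := perm_mx (tperm (inord i.-1 : 'I_7) (inord j.-1)).

Definition h : algC := 1 / 2%:R.

Definition Xm : M8 := mx_rows 8
  [:: [:: h; h; -h; -h; -h; h; h; h];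
      [:: 0; 1; 0; 0; 0; 0; 0; 0];
      [:: -h; h; h; -h; -h; h; h; h];
      [:: -h; h; -h; h; -h; h; h; h];
      [:: -h; h; -h; -h; h; h; h; h];
      [:: 0; 0; 0; 0; 0; 1; 0; 0];
      [:: 0; 0; 0; 0; 0; 0; 1; 0];
      [:: 0; 0; 0; 0; 0; 0; 0; 1]].

Definition Ym : M8 := mx_rows 8
  [:: [:: -1; 2%:R; 0; 0; 0; 0; 0; 0];
      [:: -1; 1; 1; 0; 0; 0; 0; 0];
      [:: 0; 1; 0; 0; 0; 0; 0; 0];
      [:: -1; 1; 0; 1; 0; 0; 0; 0];
      [:: -1; 1; 0; 0; 1; 0; 0; 0];
      [:: -1; 1; 0; 0; 0; 1; 0; 0];
      [:: -1; 1; 0; 0; 0; 0; 1; 0];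
      [:: -1; 1; 0; 0; 0; 0; 0; 1]].

Definition X1m : M7 := mx_rows 7
  [:: [:: 1; 0; 0; 0; 0; 0; 0];
      [:: 0; 0; -1; 0; 1; 0; 0];
      [:: 0; -1; 0; 0; 1; 0; 0];
      [:: 0; 0; 0; 1; 0; 0; 0];
      [:: 0; 0; 0; 0; 1; 0; 0];
      [:: 0; -1; -1; 0; 1; 1; 0];
      [:: 0; -1; -1; 0; 1; 0; 1]].

Inductive gen (n : nat) (gs : seq 'M[algC]_n.+1) : 'M[algC]_n.+1 -> Prop :=
  | gen_one : gen gs 1%:M
  | gen_mul g x : g \in gs -> gen gs x -> gen gs (g *m x)
  | gen_inv g x : g \in gs -> gen gs x -> gen gs (invmx g *m x).

Definition s1 : M8 := Ym *m tr8 2 3.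
Definition s2 : M8 := tr8 3 4.
Definition s3 : M8 := tr8 4 5.
Definition s4 : M8 := tr8 5 6.
Definition s5 : M8 := tr8 6 7.
Definition s6 : M8 := tr8 7 8.
Definition s3' : M8 := Xm.

Definition inH : M8 -> Prop :=
  gen [:: tr8 2 3; tr8 3 4; tr8 4 5; tr8 5 6; tr8 6 7; tr8 7 8; Xm; Ym].
Definition inG : M8 -> Prop := gen [:: s2; s3; s4; s5; s6; s3'].
Definition inQ : M8 -> Prop := gen [:: s1; s2; s3; s4; s5; s3'].

Definition a1 : M7 := tr7 2 3.
Definition a2 : M7 := tr7 3 4.
Definition a3 : M7 := X1m.
Definition a4 : M7 := tr7 5 6.
Definition a5 : M7 := tr7 6 7.
Definition a1' : M7 := tr7 1 4.

Definition inH1 : M7 -> Prop :=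
  gen [:: tr7 1 2; tr7 2 3; tr7 3 4; tr7 5 6; tr7 6 7; X1m].

(* the affine hyperplane W : 2 + 3a = b + c + d + e + f + g + h *)
Definition inW (w : 'cV[algC]_8) : Prop :=
  2%:R + 3%:R * w 0 0 = \sum_(k < 8 | k != 0 :> nat) w k 0.

(* x_0 = b, x_1 = h, x_2 = g, ..., x_6 = c, x_7 = a (0-based coordinate index) *)
Definition xidx (k : nat) : nat := nth 0%N [:: 1; 7; 6; 5; 4; 3; 2; 0]%N k.
Definition xc (k : nat) (w : 'cV[algC]_8) : algC := w (inord (xidx k)) 0.

(* affine function labelling the coset: sgn = false gives v(i,j), i.e.
   x_i + x_j - x_7; sgn = true gives -v(i,j), i.e. 1 + x_7 - x_i - x_j *)
Definition labf (sgn : bool) (i j : nat) (w : 'cV[algC]_8) : algC :=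
  if sgn then 1 + xc 7 w - xc i w - xc j w else xc i w + xc j w - xc 7 w.

Definition valid_label (i j : nat) : Prop := (i < j <= 7)%N.

Definition coset_entry (alpha : M8) (f : 'cV[algC]_8 -> algC) : Prop :=
  forall w, inW w -> (alpha *m w) (inord 1) 0 = f w.

Definition same_coset (alpha beta : M8) : Prop :=
  exists g, inG g /\ beta = g *m alpha.

Definition orbit_class (sgn : bool) (i j : nat) : nat :=
  if [|| (~~ sgn && (i == 0%N) && (2 <= j)%N) | (sgn && (i == 1%N) && (2 <= j)%N)] then 1%N
  else if [|| (~~ sgn && (i == 1%N) && (2 <= j)%N) | (sgn && (i == 0%N) && (2 <= j)%N)] then 2%N
  else 3%N.

From HB Require Import structures.
From mathcomp Require Import all_boot all_order all_algebra all_fingroup all_field.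
From mathcomp Require Import zify ring.
Import GRing.Theory Num.Theory.
Local Open Scope ring_scope.
Set Implicit Arguments. Unset Strict Implicit. Unset Printing Implicit Defensive.

(* (a) Under Q the space C^8 splits as R C^7 (+) C c, where R intertwines s_k with a_(6-k)
   and s_3' with a_1', and c is fixed by Q.  If [T; f] is the inverse of [R | c], then
   x |-> T x R is multiplicative on Q, recovers x as R (T x R) T + c f, and maps the
   generators of Q to those of H1.
   (b) The coset G alpha is recorded by the second row of alpha, which on W is one of 56
   label functions.  A Schreier transversal of G in H, certified by words in the generators
   of G, shows that alpha is determined up to G by this row.  Right multiplication by Q acts
   on the 56 rows, preserving the three classes and transitively on each; both facts, like
   all other finite checks, are exact rational computations. *)

Lemma uniq_map_inj_in (T1 T2 : eqType) (f : T1 -> T2) s :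
  uniq (map f s) -> {in s &, injective f}.
Proof.
elim: s => //= x s IH /andP[fx_s /IH inj_f] y z; rewrite !inE.
case/predU1P => [-> | ys] /predU1P[-> | zs] // fyz; last exact: inj_f.
  by rewrite fyz map_f in fx_s.
by rewrite -fyz map_f in fx_s.
Qed.

Lemma all2_meml (T1 : eqType) T2 (P : T1 -> T2 -> bool) s t x :
  all2 P s t -> x \in s -> exists y, P x y.
Proof.
elim: s t => [|a s IH] [|b t] //= /andP[Pab st]; rewrite inE.
by case/predU1P => [->|/(IH _ st)]; first exists b.
Qed.

Fixpoint saturate (T : eqType) (next : T -> seq T) (n : nat) (s : seq T) : seq T :=
  if n is n'.+1 then
    let s' := undup (s ++ flatten (map next s)) in
    if size s' == size s then s else saturate next n' s'
  else s.

Lemma saturate_ind (T : eqType) (P : T -> Prop) (next : T -> seq T) n s :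
  {in s, forall x, P x} -> (forall x y, P x -> y \in next x -> P y) ->
  {in saturate next n s, forall x, P x}.
Proof.
elim: n s => [|n IH] s Ps Pnext //=; case: ifP => // _; apply: IH => // x.
rewrite mem_undup mem_cat => /orP[/Ps //|/flatten_mapP[y s_y]]; exact/Pnext/Ps.
Qed.

(** * Groups generated by involutions *)

Section GeneratedGroups.

Variable n : nat.
Implicit Types (gs hs : seq 'M[algC]_n.+1) (g x y : 'M[algC]_n.+1).

Definition involutions gs := {in gs, forall g, g *m g = 1%:M}.

Lemma invmx_left x y : y *m x = 1%:M -> invmx x = y.
Proof.
move=> yx; have [_ xu] := mulmx1_unit yx.
by rewrite -[RHS]mulmx1 -(mulmxV xu) mulmxA yx mul1mx.
Qed.

Lemma gen_mulmx gs x y : gen gs x -> gen gs y -> gen gs (x *m y).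
Proof.
elim=> [|g x' gs_g _ IH|g x' gs_g _ IH] gen_y; first by rewrite mul1mx.
  by rewrite -mulmxA; apply: gen_mul => //; apply: IH.
by rewrite -mulmxA; apply: gen_inv => //; apply: IH.
Qed.

Lemma gen_mem gs g : g \in gs -> gen gs g.
Proof. by move=> gs_g; rewrite -[g]mulmx1; apply: gen_mul => //; apply: gen_one. Qed.

Lemma gen_sub gs hs :
  {in gs, forall g, gen hs g /\ gen hs (invmx g)} -> forall x, gen gs x -> gen hs x.
Proof.
move=> gs_hs x; elim=> [|g {}x /gs_hs[hs_g _] _ hs_x|g {}x /gs_hs[_ hs_g'] _ hs_x].
- exact: gen_one.
- exact: gen_mulmx.
- exact: gen_mulmx.
Qed.

Lemma gen_ind_involutions gs (P : 'M[algC]_n.+1 -> Prop) : involutions gs ->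
  P 1%:M -> (forall g x, g \in gs -> gen gs x -> P x -> P (g *m x)) ->
  forall x, gen gs x -> P x.
Proof.
move=> inv_gs P1 PM x; elim=> [//|g {}x gs_g gen_x Px|g {}x gs_g gen_x Px].
  exact: PM.
by rewrite (invmx_left (inv_gs _ _)) //; apply: PM.
Qed.

Lemma gen_ind_involutions_r gs (P : 'M[algC]_n.+1 -> Prop) : involutions gs ->
  P 1%:M -> (forall x g, g \in gs -> P x -> P (x *m g)) -> forall x, gen gs x -> P x.
Proof.
move=> inv_gs P1 PM x gen_x.
suff /(_ _ P1) : forall y, P y -> P (y *m x) by rewrite mul1mx.
move: x gen_x; apply: (gen_ind_involutions (P := fun x => forall y, P y -> P (y *m x)) inv_gs).
  by move=> y Py; rewrite mulmx1.
move=> g x gs_g _ IH y Py.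
by rewrite mulmxA; apply/IH/PM.
Qed.

Lemma gen_left_inverse gs :
  involutions gs -> forall x, gen gs x -> exists2 y, gen gs y & y *m x = 1%:M.
Proof.
move=> inv_gs; apply: gen_ind_involutions_r => // [|x g gs_g [y gen_y yx]].
  by exists 1%:M; [apply: gen_one | rewrite mulmx1].
exists (g *m y); first by apply/gen_mulmx/gen_y/gen_mem.
by rewrite mulmxA -(mulmxA g) yx mulmx1 inv_gs.
Qed.

Lemma gen_invmx gs x : involutions gs -> gen gs x -> gen gs (invmx x).
Proof. by move=> inv_gs /(gen_left_inverse inv_gs)[y gen_y /invmx_left->]. Qed.

Section Transversal.

Variables (hs gs reps : seq 'M[algC]_n.+1).
Hypotheses (inv_hs : involutions hs) (one_in_reps : 1%:M \in reps).
Hypothesis reps_closed : {in reps & hs, forall r h,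
  exists2 r', r' \in reps & exists2 g, gen gs g & r *m h = g *m r'}.

Lemma gen_transversal :
  forall x, gen hs x -> exists2 r, r \in reps & exists2 g, gen gs g & x = g *m r.
Proof.
apply: gen_ind_involutions_r => // [|x h hs_h [r reps_r [g gen_g ->]]].
  by exists 1%:M => //; exists 1%:M; [apply: gen_one | rewrite mulmx1].
have [r' reps_r' [g' gen_g' rh]] := reps_closed reps_r hs_h.
by exists r' => //; exists (g *m g'); [apply: gen_mulmx | rewrite -mulmxA rh mulmxA].
Qed.

End Transversal.

End GeneratedGroups.

Lemma gen_morph_image n k (m : 'M[algC]_n.+1 -> 'M[algC]_k.+1) (gs : seq 'M[algC]_n.+1) :
    involutions gs -> m 1%:M = 1%:M ->
    (forall x y, gen gs x -> gen gs y -> m (x *m y) = m x *m m y) ->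
  forall z, gen (map m gs) z <-> exists2 x, gen gs x & m x = z.
Proof.
move=> inv_gs m1 mM z; split; last first.
  case=> x + <-; move: x; apply: gen_ind_involutions => // [|g x gs_g gen_x IH].
    by rewrite m1; apply: gen_one.
  by rewrite (mM _ _ (gen_mem gs_g) gen_x); apply: gen_mul (map_f m gs_g) IH.
have inv_m : involutions (map m gs).
  by move=> _ /mapP[g gs_g ->]; rewrite -mM ?inv_gs //; apply: gen_mem.
move: z; apply: gen_ind_involutions => // [|_ z /mapP[g gs_g ->] _ [x gen_x <-]].
  by exists 1%:M; [apply: gen_one | rewrite m1].
by exists (g *m x); [apply/gen_mulmx/gen_x/gen_mem | rewrite (mM _ _ (gen_mem gs_g) gen_x)].
Qed.

(** * Restriction to an invariant complement *)

Section Intertwiner.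

Variables (n k : nat) (R : 'M[algC]_(n, k)) (T : 'M[algC]_(k, n)).
Variables (c : 'cV[algC]_n) (f : 'rV[algC]_n).
Hypotheses (TR : T *m R = 1%:M) (Tc : T *m c = 0) (RT_cf : R *m T + c *m f = 1%:M).

Definition restr (x : 'M[algC]_n) : 'M[algC]_k := T *m x *m R.

Definition intertwines (x : 'M[algC]_n) := x *m R = R *m restr x /\ x *m c = c.

Lemma restr1 : restr 1%:M = 1%:M.
Proof. by rewrite /restr mulmx1. Qed.

Lemma restrM x y : x *m c = c -> restr (x *m y) = restr x *m restr y.
Proof.
move=> xc; have -> : x *m y = x *m (R *m T + c *m f) *m y by rewrite RT_cf mulmx1.
by rewrite /restr mulmxDr !mulmxDl mulmxDr mulmxDl (mulmxA x c) xc !mulmxA Tc !mul0mx addr0.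
Qed.

Lemma intertwinesM x y : intertwines x -> intertwines y -> intertwines (x *m y).
Proof.
move=> [xR xc] [yR yc]; split; last by rewrite -mulmxA yc.
by rewrite restrM // -mulmxA yR mulmxA xR mulmxA.
Qed.

Lemma intertwines_decomp x : intertwines x -> x = R *m restr x *m T + c *m f.
Proof. by move=> [xR xc]; rewrite -[LHS]mulmx1 -RT_cf mulmxDr (mulmxA x R) (mulmxA x c) xR xc. Qed.

End Intertwiner.

(** * Exact rational matrices *)

(* Lists of rows, evaluated by [vm_compute]; [mxq] maps them to matrices over algC. *)
Definition qmx := seq (seq rat).
Definition qentry (A : qmx) (i j : nat) : rat := nth 0 (nth [::] A i) j.
Definition qsum (s : seq rat) : rat := foldr +%R 0 s.
Definition qmul (m n p : nat) (A B : qmx) : qmx :=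
  mkseq (fun i => mkseq (fun j => qsum (mkseq (fun k => qentry A i k * qentry B k j) n)) p) m.
Definition qadd (m n : nat) (A B : qmx) : qmx :=
  mkseq (fun i => mkseq (fun j => qentry A i j + qentry B i j) n) m.
Definition qid (n : nat) : qmx := mkseq (fun i => mkseq (fun j => (i == j)%:R) n) n.
Definition qinvolutions (n : nat) (gs : seq qmx) : bool :=
  all (fun A => qmul n n n A A == qid n) gs.

(* Letters out of range of [gs] stand for the identity. *)
Definition qword (n : nat) (gs : seq qmx) (w : seq nat) : qmx :=
  foldr (fun i A => qmul n n n (nth (qid n) gs i) A) (qid n) w.

Definition mxq (m n : nat) (A : qmx) : 'M[algC]_(m, n) := \matrix_(i, j) ratr (qentry A i j).

Lemma qsum_mkseq n (f : nat -> rat) : qsum (mkseq f n) = \sum_(k < n) f k.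
Proof.
rewrite /qsum -(big_mkord xpredT f) /index_iota subn0 /mkseq.
by elim: (iota 0 n) => [|k s IH]; rewrite ?big_nil ?big_cons //= IH.
Qed.

Lemma mxqM m n p A B : mxq m n A *m mxq n p B = mxq m p (qmul m n p A B).
Proof.
apply/matrixP=> i j; rewrite !mxE /qentry !nth_mkseq // qsum_mkseq rmorph_sum.
by apply: eq_bigr => k _; rewrite !mxE rmorphM.
Qed.

Lemma mxqD m n A B : mxq m n A + mxq m n B = mxq m n (qadd m n A B).
Proof. by apply/matrixP=> i j; rewrite !mxE /qentry /qadd !nth_mkseq // rmorphD. Qed.

Lemma mxq1 n : mxq n n (qid n) = 1%:M.
Proof. by apply/matrixP=> i j; rewrite !mxE /qentry !nth_mkseq // rmorph_nat. Qed.

Lemma mx_rows_ratr n (A : qmx) : mx_rows n (map (map ratr) A) = mxq n n A.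
Proof.
have nth_map_dflt T1 T2 (f : T1 -> T2) x1 s k : nth (f x1) (map f s) k = f (nth x1 s k).
  by case: (ltnP k (size s)) => ?; [rewrite (nth_map x1) | rewrite !nth_default ?size_map].
apply/matrixP=> i j; rewrite !mxE /qentry -(rmorph0 ratr).
by rewrite (nth_map_dflt _ _ _ [::]) nth_map_dflt.
Qed.

Lemma gen_qword n (gs : seq qmx) w : gen (map (mxq n.+1 n.+1) gs) (mxq _ _ (qword n.+1 gs w)).
Proof.
elim: w => [|i w IH] /=; first by rewrite mxq1; apply: gen_one.
rewrite -mxqM; apply: gen_mulmx IH.
case: (ltnP i (size gs)) => [ltig|legi]; first by apply/gen_mem/map_f/mem_nth.
by rewrite nth_default // mxq1; apply: gen_one.
Qed.

Lemma qinvolutionsP n gs : qinvolutions n.+1 gs -> involutions (map (mxq n.+1 n.+1) gs).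
Proof. by move=> /allP inv_gs _ /mapP[A /inv_gs/eqP AA ->]; rewrite mxqM AA mxq1. Qed.

Definition qwords_cover (n : nat) (gs hs : seq qmx) (ws : seq (seq nat)) : bool :=
  all (fun A => has (fun w => A == qword n hs w) ws) gs.

Lemma qwords_coverP n gs hs ws : qwords_cover n.+1 gs hs ws ->
  {in map (mxq n.+1 n.+1) gs, forall g, gen (map (mxq n.+1 n.+1) hs) g}.
Proof. by move=> /allP cover _ /mapP[A /cover/hasP[w _ /eqP ->] ->]; apply: gen_qword. Qed.

Lemma gen_sub_qwords n gs hs ws :
    involutions (map (mxq n.+1 n.+1) hs) -> qwords_cover n.+1 gs hs ws ->
  forall x, gen (map (mxq n.+1 n.+1) gs) x -> gen (map (mxq n.+1 n.+1) hs) x.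
Proof.
move=> inv_hs /qwords_coverP cover; apply: gen_sub => g /cover gen_g.
by split; last apply: gen_invmx.
Qed.

Lemma mxq_qword_cat n gs u v :
  mxq n n (qword n gs (u ++ v)) = mxq n n (qword n gs u) *m mxq n n (qword n gs v).
Proof. by elim: u => [|i u IH] /=; rewrite ?mxq1 ?mul1mx // -!mxqM IH mulmxA. Qed.

Lemma mxq_qword_rev n gs w : qinvolutions n gs ->
  mxq n n (qword n gs (rev w)) *m mxq n n (qword n gs w) = 1%:M.
Proof.
move=> /allP inv_gs; have gg i : mxq n n (nth (qid n) gs i) *m mxq n n (nth (qid n) gs i) = 1%:M.
  case: (ltnP i (size gs)) => [/(mem_nth (qid n))/inv_gs/eqP|/(nth_default (qid n))->].
    by rewrite mxqM => ->; rewrite mxq1.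
  by rewrite mxq1 mulmx1.
elim: w => [|i w IH]; first by rewrite /= mxq1 mulmx1.
rewrite rev_cons -cats1 mxq_qword_cat /= -!mxqM mxq1 mulmx1.
by rewrite -mulmxA (mulmxA (mxq n n (nth _ _ i))) gg mul1mx.
Qed.

Lemma mxq_row_inj n (r s : seq rat) :
  size r = n -> size s = n -> mxq 1 n [:: r] = mxq 1 n [:: s] -> r = s.
Proof.
move=> sr ss rs; apply: (@eq_from_nth _ 0) => [|k]; first by rewrite sr ss.
rewrite sr => ltk; have := congr1 (fun M : 'rV_n => M 0 (Ordinal ltk)) rs.
by rewrite !mxE => /fmorph_inj.
Qed.

Definition qtransp (n i j : nat) : qmx :=
  let swap a := if a == i.-1 then j.-1 else if a == j.-1 then i.-1 else a in
  mkseq (fun a => mkseq (fun b => (swap a == b)%:R) n) n.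

Lemma perm_mx_qtransp n i j : (i.-1 < n.+1)%N -> (j.-1 < n.+1)%N ->
  perm_mx (tperm (inord i.-1 : 'I_n.+1) (inord j.-1)) = mxq n.+1 n.+1 (qtransp n.+1 i j).
Proof.
move=> lti ltj; apply/matrixP=> a b; rewrite !mxE /qentry !nth_mkseq // rmorph_nat -val_eqE.
congr (_ == _)%:R; case: tpermP => [->|->|ai aj] /=; rewrite ?inordK ?eqxx //.
  by case: eqP.
have neq_a k : a <> inord k -> (val a == k) = false.
  by move=> ak; apply/negbTE/eqP => eak; apply: ak; rewrite -eak inord_val.
by rewrite !neq_a.
Qed.

Lemma tr8E i j : (i.-1 < 8)%N -> (j.-1 < 8)%N -> tr8 i j = mxq 8 8 (qtransp 8 i j).
Proof. exact: perm_mx_qtransp. Qed.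

Lemma tr7E i j : (i.-1 < 7)%N -> (j.-1 < 7)%N -> tr7 i j = mxq 7 7 (qtransp 7 i j).
Proof. exact: perm_mx_qtransp. Qed.

Definition Xq : qmx :=
  let h : rat := 1 / 2 in
  [:: [:: h; h; -h; -h; -h; h; h; h];
      [:: 0; 1; 0; 0; 0; 0; 0; 0];
      [:: -h; h; h; -h; -h; h; h; h];
      [:: -h; h; -h; h; -h; h; h; h];
      [:: -h; h; -h; -h; h; h; h; h];
      [:: 0; 0; 0; 0; 0; 1; 0; 0];
      [:: 0; 0; 0; 0; 0; 0; 1; 0];
      [:: 0; 0; 0; 0; 0; 0; 0; 1]].

Definition Yq : qmx :=
  [:: [:: -1; 2; 0; 0; 0; 0; 0; 0];
      [:: -1; 1; 1; 0; 0; 0; 0; 0];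
      [:: 0; 1; 0; 0; 0; 0; 0; 0];
      [:: -1; 1; 0; 1; 0; 0; 0; 0];
      [:: -1; 1; 0; 0; 1; 0; 0; 0];
      [:: -1; 1; 0; 0; 0; 1; 0; 0];
      [:: -1; 1; 0; 0; 0; 0; 1; 0];
      [:: -1; 1; 0; 0; 0; 0; 0; 1]].

Definition X1q : qmx :=
  [:: [:: 1; 0; 0; 0; 0; 0; 0];
      [:: 0; 0; -1; 0; 1; 0; 0];
      [:: 0; -1; 0; 0; 1; 0; 0];
      [:: 0; 0; 0; 1; 0; 0; 0];
      [:: 0; 0; 0; 0; 1; 0; 0];
      [:: 0; -1; -1; 0; 1; 1; 0];
      [:: 0; -1; -1; 0; 1; 0; 1]].

Lemma XmE : Xm = mxq 8 8 Xq.
Proof. by rewrite -mx_rows_ratr /Xq /= !rmorphN fmorph_div !rmorph0 !rmorph1 rmorph_nat. Qed.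

Lemma YmE : Ym = mxq 8 8 Yq.
Proof. by rewrite -mx_rows_ratr /Yq /= !rmorphN !rmorph0 !rmorph1 rmorph_nat. Qed.

Lemma X1mE : X1m = mxq 7 7 X1q.
Proof. by rewrite -mx_rows_ratr /X1q /= !rmorphN !rmorph0 !rmorph1. Qed.

Definition s1q : qmx := qmul 8 8 8 Yq (qtransp 8 2 3).

Lemma s1E : s1 = mxq 8 8 s1q.
Proof. by rewrite /s1 YmE tr8E // mxqM. Qed.

(* Involutive generators of H: Y is replaced by s1 = Y (23). *)
Definition Hq : seq qmx := [:: qtransp 8 2 3; qtransp 8 3 4; qtransp 8 4 5; qtransp 8 5 6;
  qtransp 8 6 7; qtransp 8 7 8; Xq; s1q].
Definition Gq : seq qmx :=
  [:: qtransp 8 3 4; qtransp 8 4 5; qtransp 8 5 6; qtransp 8 6 7; qtransp 8 7 8; Xq].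
Definition Qq : seq qmx :=
  [:: s1q; qtransp 8 3 4; qtransp 8 4 5; qtransp 8 5 6; qtransp 8 6 7; Xq].
Definition H1q : seq qmx :=
  [:: qtransp 7 1 2; qtransp 7 2 3; qtransp 7 3 4; qtransp 7 5 6; qtransp 7 6 7; X1q].
Definition Aq : seq qmx :=
  [:: qtransp 7 6 7; qtransp 7 5 6; X1q; qtransp 7 3 4; qtransp 7 2 3; qtransp 7 1 4].

Lemma inGE : inG = gen (map (mxq 8 8) Gq).
Proof. by rewrite /inG /s2 /s3 /s4 /s5 /s6 /s3' XmE !tr8E. Qed.

Lemma generators_Q : [:: s1; s2; s3; s4; s5; s3'] = map (mxq 8 8) Qq.
Proof. by rewrite s1E /s2 /s3 /s4 /s5 /s3' XmE !tr8E. Qed.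

Lemma inQE : inQ = gen (map (mxq 8 8) Qq).
Proof. by rewrite /inQ generators_Q. Qed.

Lemma inH1E : inH1 = gen (map (mxq 7 7) H1q).
Proof. by rewrite /inH1 X1mE !tr7E. Qed.

Lemma generators_A : [:: a5; a4; a3; a2; a1; a1'] = map (mxq 7 7) Aq.
Proof. by rewrite /a5 /a4 /a3 /a2 /a1 /a1' X1mE !tr7E. Qed.

Lemma involutions_Hq : qinvolutions 8 Hq. Proof. by vm_compute. Qed.
Lemma involutions_Gq : qinvolutions 8 Gq. Proof. by vm_compute. Qed.
Lemma involutions_Qq : qinvolutions 8 Qq. Proof. by vm_compute. Qed.
Lemma involutions_H1q : qinvolutions 7 H1q. Proof. by vm_compute. Qed.
Lemma involutions_Aq : qinvolutions 7 Aq. Proof. by vm_compute. Qed.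

Definition HYq : seq qmx := [:: qtransp 8 2 3; qtransp 8 3 4; qtransp 8 4 5; qtransp 8 5 6;
  qtransp 8 6 7; qtransp 8 7 8; Xq; Yq].

(* Y = s1 (23) and s1 = Y (23); the other generators are shared. *)
Definition HY_words : seq (seq nat) := [:: 7; 0] :: [seq [:: k] | k <- iota 0 7].

Lemma HY_words_HYq : qwords_cover 8 HYq Hq HY_words. Proof. by vm_compute. Qed.
Lemma HY_words_Hq : qwords_cover 8 Hq HYq HY_words. Proof. by vm_compute. Qed.

Lemma inHE x : inH x <-> gen (map (mxq 8 8) Hq) x.
Proof.
have inv_Hq := qinvolutionsP involutions_Hq.
have -> : inH = gen (map (mxq 8 8) HYq) by rewrite /inH XmE YmE !tr8E.
split; first exact: (gen_sub_qwords inv_Hq HY_words_HYq (x := x)).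
move=> gen_x; apply: (gen_sub _ gen_x) => g Hq_g.
rewrite (invmx_left (inv_Hq _ Hq_g)).
by split; apply: qwords_coverP HY_words_Hq _ Hq_g.
Qed.

Lemma Qq_in_Hq : qwords_cover 8 Qq Hq [seq [:: k] | k <- iota 0 8]. Proof. by vm_compute. Qed.

Lemma inQ_inH x : inQ x -> inH x.
Proof.
rewrite inQE => Q_x; apply/inHE.
exact: (gen_sub_qwords (qinvolutionsP involutions_Hq) Qq_in_Hq (x := x)).
Qed.

(** * Part (a): Q is isomorphic to H1 *)

(* As Q-modules C^8 = Rq C^7 (+) C cq: Rq intertwines Qq with Aq and cq is fixed by Q;
   [Tq; fq] is the inverse of [Rq | cq]. *)
Definition Rq : qmx :=
  [:: [:: 1; 0; 0; 0; -1; -1; 1];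
      [:: 1 / 2; 1 / 2; 1 / 2; 1 / 2; -1; -1; 0];
      [:: 1; 0; 0; 0; -1; 0; 0];
      [:: 1; 0; 0; 0; 0; -1; 0];
      [:: 1; 1; 1; 0; -1; -1; 0];
      [:: 1; 1; 0; 1; -1; -1; 0];
      [:: 1; 0; 1; 1; -1; -1; 0];
      [:: -1 / 2; -1 / 2; -1 / 2; -1 / 2; 0; 0; 1]].
Definition cq : qmx :=
  [:: [:: 0];
      [:: -1];
      [:: 0];
      [:: 0];
      [:: 0];
      [:: 0];
      [:: 0];
      [:: 1]].
Definition Tq : qmx :=
  [:: [:: 1; -1; 0; 0; 0; 0; 0; -1];
      [:: 1 / 2; -1 / 2; -1 / 2; -1 / 2; 1 / 2; 1 / 2; -1 / 2; -1 / 2];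
      [:: 1 / 2; -1 / 2; -1 / 2; -1 / 2; 1 / 2; -1 / 2; 1 / 2; -1 / 2];
      [:: 1 / 2; -1 / 2; -1 / 2; -1 / 2; -1 / 2; 1 / 2; 1 / 2; -1 / 2];
      [:: 1; -1; -1; 0; 0; 0; 0; -1];
      [:: 1; -1; 0; -1; 0; 0; 0; -1];
      [:: 2; -1; -1; -1; 0; 0; 0; -1]].
Definition fq : qmx :=
  [:: [:: -3 / 4; -1 / 4; 1 / 4; 1 / 4; 1 / 4; 1 / 4; 1 / 4; 3 / 4]].

Definition restr_q (A : qmx) : qmx := qmul 7 8 7 (qmul 7 8 8 Tq A) Rq.

Lemma intertwiner_q : [&& qmul 7 8 7 Tq Rq == qid 7, qmul 7 8 1 Tq cq == nseq 7 [:: 0],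
  qadd 8 8 (qmul 8 7 8 Rq Tq) (qmul 8 1 8 cq fq) == qid 8 &
  all (fun A => (qmul 8 8 7 A Rq == qmul 8 7 7 Rq (restr_q A)) && (qmul 8 8 1 A cq == cq)) Qq].
Proof. by vm_compute. Qed.

Lemma restr_Qq : map restr_q Qq == Aq. Proof. by vm_compute. Qed.

Definition restrQ : M8 -> M7 := restr (mxq 8 7 Rq) (mxq 7 8 Tq).

Lemma restrQ_mxq A : restrQ (mxq 8 8 A) = mxq 7 7 (restr_q A).
Proof. by rewrite /restrQ /restr !mxqM. Qed.

Lemma restrQ_split :
  [/\ mxq 7 8 Tq *m mxq 8 7 Rq = 1%:M, mxq 7 8 Tq *m mxq 8 1 cq = 0 &
      mxq 8 7 Rq *m mxq 7 8 Tq + mxq 8 1 cq *m mxq 1 8 fq = 1%:M].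
Proof.
have /and4P[/eqP TR /eqP Tc /eqP RT_cf _] := intertwiner_q.
split; first by rewrite mxqM TR mxq1.
  rewrite mxqM Tc; apply/matrixP => i j.
  by rewrite !mxE /qentry nth_nseq ltn_ord (ord1 j) /= rmorph0.
by rewrite !mxqM mxqD RT_cf mxq1.
Qed.

Lemma inQ_intertwines x : inQ x -> intertwines (mxq 8 7 Rq) (mxq 7 8 Tq) (mxq 8 1 cq) x.
Proof.
have [TR Tc RT_cf] := restrQ_split.
have /and4P[_ _ _ /allP Qq_int] := intertwiner_q.
rewrite inQE; move: x; apply: gen_ind_involutions; first exact: qinvolutionsP involutions_Qq.
  by split; rewrite ?mul1mx // (restr1 TR) mulmx1.
move=> _ x /mapP[A /Qq_int/andP[/eqP AR /eqP Ac] ->] _; apply: (intertwinesM Tc RT_cf).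
by split; rewrite ?mxqM ?Ac // -/restrQ restrQ_mxq AR mxqM.
Qed.

Lemma restrQM x y : inQ x -> inQ y -> restrQ (x *m y) = restrQ x *m restrQ y.
Proof.
have [_ Tc RT_cf] := restrQ_split.
by move=> /inQ_intertwines[_ xc] _; apply: (restrM Tc RT_cf _ xc).
Qed.

Lemma restrQ_inj x y : inQ x -> inQ y -> restrQ x = restrQ y -> x = y.
Proof.
have [_ _ RT_cf] := restrQ_split.
move=> /inQ_intertwines/(intertwines_decomp RT_cf) ex.
move=> /inQ_intertwines/(intertwines_decomp RT_cf) ey exy.
by rewrite [LHS]ex [RHS]ey -/restrQ exy.
Qed.

Lemma restrQ_generators : map restrQ [:: s1; s2; s3; s4; s5; s3'] = [:: a5; a4; a3; a2; a1; a1'].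
Proof.
by rewrite generators_Q generators_A -map_comp (eq_map restrQ_mxq) map_comp (eqP restr_Qq).
Qed.

Definition H1_in_A : seq (seq nat) :=
  [:: [:: 4; 3; 4; 5; 4; 3; 4]; [:: 4]; [:: 3]; [:: 1]; [:: 0]; [:: 2]].
Definition A_in_H1 : seq (seq nat) :=
  [:: [:: 4]; [:: 3]; [:: 5]; [:: 2]; [:: 1]; [:: 2; 1; 0; 1; 2]].

Lemma H1_words_A : qwords_cover 7 H1q Aq H1_in_A. Proof. by vm_compute. Qed.
Lemma A_words_H1 : qwords_cover 7 Aq H1q A_in_H1. Proof. by vm_compute. Qed.

Lemma restrQ_image z : inH1 z <-> exists x, inQ x /\ restrQ x = z.
Proof.
have [TR _ _] := restrQ_split.
have hom x y : gen (map (mxq 8 8) Qq) x -> gen (map (mxq 8 8) Qq) y ->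
    restrQ (x *m y) = restrQ x *m restrQ y by rewrite -inQE; apply: restrQM.
have morph := gen_morph_image (qinvolutionsP involutions_Qq) (restr1 TR) hom z.
rewrite -inQE -generators_Q restrQ_generators generators_A in morph.
have inv_A := qinvolutionsP involutions_Aq; have inv_H1 := qinvolutionsP involutions_H1q.
rewrite inH1E; split => [/(gen_sub_qwords inv_A H1_words_A)/morph[x Q_x <-]|[x [Q_x xz]]].
  by exists x.
by apply: (gen_sub_qwords inv_H1 A_words_H1 (x := z)); apply/morph; exists x.
Qed.

(** * Labels of the cosets *)

Definition phi_coef (k : nat) : rat := if k == 0%N then -3 else 1.

Lemma inW_phi w : inW w <-> \sum_(k < 8) ratr (phi_coef k) * w k 0 = 2%:R.
Proof.
rewrite /inW [X in _ <-> X = _](bigD1 ord0) //= {1}/phi_coef /= rmorphN rmorph_nat.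
rewrite [X in _ <-> _ + X = _](eq_bigr (fun k => w k 0)) => [|k]; last first.
  by rewrite -val_eqE /= => /negbTE k0; rewrite /phi_coef k0 rmorph1 mul1r.
rewrite [X in _ <-> _ + X = _](eq_bigl (fun k : 'I_8 => k != 0 :> nat)) => [|k].
  by split=> [<-|<-]; rewrite mulNr; [rewrite addrC addrK | rewrite addrAC addNr add0r].
by rewrite -val_eqE.
Qed.

Lemma xidx_lt k : (xidx k < 8)%N.
Proof. by rewrite /xidx; case: k => [|[|[|[|[|[|[|[|k]]]]]]]] //; rewrite nth_default. Qed.

Definition label := (bool * nat * nat)%type.

Definition delta_coef (a k : nat) : rat := (k == xidx a)%:R.

(* On W the label function [labft t] is this linear form: the constant 1 of -v(i,j) is
   phi(w) / 2 there. *)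
Definition label_coef (t : label) : nat -> rat :=
  let: (sgn, i, j) := t in
  let c := delta_coef i \+ delta_coef j \- delta_coef 7 in
  if sgn then (fun k => phi_coef k / 2%:R) \- c else c.

Definition label_row (t : label) : seq rat := mkseq (label_coef t) 8.
Definition label_mx (t : label) : 'rV[algC]_8 := mxq 1 8 [:: label_row t].
Definition labft (t : label) := labf t.1.1 t.1.2 t.2.

Lemma labfE t w : inW w -> labft t w = (label_mx t *m w) 0 0.
Proof.
move=> /inW_phi Wphi.
pose lin (f : nat -> rat) := \sum_(k < 8) ratr (f k) * w k 0.
have linD f g : lin (f \+ g) = lin f + lin g.
  by rewrite -big_split; apply: eq_bigr => k _; rewrite rmorphD mulrDl.
have linB f g : lin (f \- g) = lin f - lin g.
  by rewrite -sumrB; apply: eq_bigr => k _; rewrite rmorphB mulrBl.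
have lin_half : lin (fun k => phi_coef k / 2%:R) = 1.
  have -> : lin (fun k => phi_coef k / 2%:R) = lin phi_coef / 2%:R.
    by rewrite /lin mulr_suml; apply: eq_bigr => k _; rewrite rmorphM fmorphV rmorph_nat mulrAC.
  by rewrite /lin Wphi mulfV // pnatr_eq0.
have lin_delta a : lin (delta_coef a) = xc a w.
  rewrite /lin (bigD1 (inord (xidx a))) //= /delta_coef inordK ?xidx_lt // eqxx rmorph1 mul1r.
  rewrite big1 ?addr0 // => k; rewrite -val_eqE /= inordK ?xidx_lt // => /negbTE->.
  by rewrite rmorph0 mul0r.
have -> : (label_mx t *m w) 0 0 = lin (label_coef t).
  by rewrite mxE; apply: eq_bigr => k _; rewrite mxE /qentry /= nth_mkseq.
case: t => [[[] i] j]; rewrite /labft /labf /label_coef /=.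
  by rewrite linB lin_half linB linD !lin_delta; ring.
by rewrite linB linD !lin_delta.
Qed.

Lemma coset_entry_label alpha t :
  row (inord 1) alpha = label_mx t -> coset_entry alpha (labft t).
Proof. by move=> row_alpha w Ww; rewrite labfE // -row_alpha -row_mul [RHS]mxE. Qed.

Definition labels : seq label := [seq (sgn, ij.1, ij.2) | sgn <- [:: false; true],
  ij <- [seq (i, j) | i <- iota 0 8, j <- iota i.+1 (7 - i)]].

Lemma mem_labels sgn i j : ((sgn, i, j) \in labels) = (i < j <= 7)%N.
Proof.
apply/allpairsPdep/idP => [[s [[i' j'] [_ /allpairsPdep[i'' [j'' []]]]]]|ltij].
  by rewrite !mem_iota => lti ltj [-> ->] [_ -> ->]; lia.
exists sgn, (i, j); split=> //; first by case: sgn.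
by apply/allpairsPdep; exists i, j; rewrite !mem_iota; split=> //; lia.
Qed.

(* A point of W at which the 56 label functions take distinct values. *)
Definition generic_point : seq rat := [seq n%:R | n <- [:: 53; 58; 48; 10; 11; 14; 18; 2]%N].
Definition w0 : 'cV[algC]_8 := \col_k ratr (nth 0 generic_point k).

Definition label_value (p : seq rat) (t : label) : rat :=
  let: (sgn, i, j) := t in
  let x k := nth 0 p (xidx k) in
  if sgn then 1 + x 7%N - x i - x j else x i + x j - x 7%N.

Lemma labft_col p t : labft t (\col_k ratr (nth 0 p k)) = ratr (label_value p t).
Proof.
case: t => [[[] i] j]; rewrite /labft /labf /label_value /xc !mxE !inordK ?xidx_lt //=.
  by rewrite !rmorphB rmorphD rmorph1.
by rewrite !rmorphB rmorphD.
Qed.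

Lemma phi_generic_point :
  qsum (mkseq (fun k => phi_coef k * nth 0 generic_point k) 8) == 2%:R.
Proof. by vm_compute. Qed.

Lemma inW_w0 : inW w0.
Proof.
apply/inW_phi; rewrite -(rmorph_nat ratr 2) -(eqP phi_generic_point) qsum_mkseq rmorph_sum.
by apply: eq_bigr => k _; rewrite mxE rmorphM.
Qed.

Lemma label_values_uniq : uniq (map (label_value generic_point) labels).
Proof. by vm_compute. Qed.

Lemma coset_entry_labels_inj alpha : {in labels &, forall t t',
  coset_entry alpha (labft t) -> coset_entry alpha (labft t') -> t = t'}.
Proof.
move=> t t' lab_t lab_t' et et'; apply: (uniq_map_inj_in label_values_uniq) => //.
have := etrans (esym (et _ inW_w0)) (et' _ inW_w0).
by rewrite !labft_col => /fmorph_inj.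
Qed.

(** * A Schreier transversal of G in H *)

Definition qrow (A : qmx) : seq rat := mkseq (qentry A 1) 8.

Lemma row_mxq A : row (inord 1) (mxq 8 8 A) = mxq 1 8 [:: qrow A].
Proof. by apply/rowP => k; rewrite !mxE /qentry /= nth_mkseq // inordK. Qed.

Lemma qrow_inj A B : row (inord 1) (mxq 8 8 A) = row (inord 1) (mxq 8 8 B) -> qrow A = qrow B.
Proof. by rewrite !row_mxq; apply: mxq_row_inj; rewrite size_mkseq. Qed.

Lemma G_fixes_row_q : all (fun A => qrow A == qrow (qid 8)) Gq. Proof. by vm_compute. Qed.

Lemma row_inG m g (x : 'M[algC]_(8, m)) : inG g -> row (inord 1) (g *m x) = row (inord 1) x.
Proof.
rewrite inGE => gen_g; rewrite row_mul -[in RHS](mul1mx x) row_mul; congr (_ *m _).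
move: g gen_g; apply: gen_ind_involutions => //; first exact: qinvolutionsP involutions_Gq.
move=> _ g /mapP[A /(allP G_fixes_row_q)/eqP GA ->] _ IH.
by rewrite row_mul row_mxq GA -row_mxq mxq1 -row_mul mul1mx.
Qed.

(* Coset representatives R, as words in Hq, each with a word w in Gq for every generator h
   in Hq such that w^-1 R h is again a representative (found by a breadth-first search in
   G = W(E6)). *)
Definition rep_table : seq (seq nat * seq (seq nat)) := [::
  ([::],
   [:: [::]; [:: 0]; [:: 1]; [:: 2]; [:: 3]; [:: 4]; [:: 5]; [::]]);
  ([:: 0],
   [:: [::]; [::]; [:: 1]; [:: 2]; [:: 3]; [:: 4]; [::]; [:: 5; 2; 1; 0; 3; 2; 1; 4; 3; 2; 5;
      2; 1; 0; 3; 2; 1; 4; 3; 2; 5]]);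
  ([:: 7],
   [:: [:: 5; 2; 1; 0; 3; 2; 1; 4; 3; 2; 5; 2; 1; 0; 3; 2; 1; 4; 3; 2; 5]; [::]; [:: 1];
      [:: 2]; [:: 3]; [:: 4]; [:: 5]; [::]]);
  ([:: 0; 1],
   [:: [:: 0]; [::]; [::]; [:: 2]; [:: 3]; [:: 4]; [::]; [::]]);
  ([:: 0; 6],
   [:: [:: 5]; [::]; [:: 1]; [::]; [:: 3]; [:: 4]; [::]; [:: 5; 2; 1; 0; 3; 2; 1; 4; 3; 2; 5;
      2; 1; 0; 3; 2; 1; 4; 3; 2; 5]]);
  ([:: 7; 1],
   [:: [:: 0; 5; 2; 1; 0; 3; 2; 1; 4; 3; 2; 5; 2; 1; 0; 3; 2; 1; 4; 3; 2; 5]; [::]; [::];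
      [:: 2]; [:: 3]; [:: 4]; [:: 5]; [:: 0]]);
  ([:: 0; 1; 2],
   [:: [:: 0]; [:: 1]; [::]; [::]; [:: 3]; [:: 4]; [::]; [::]]);
  ([:: 0; 1; 6],
   [:: [::]; [::]; [::]; [::]; [:: 3]; [:: 4]; [::]; [::]]);
  ([:: 0; 1; 7],
   [:: [:: 0; 5; 2; 1; 0; 3; 2; 1; 4; 3; 2; 5; 2; 1; 0; 3; 2; 1; 4; 3; 2; 5]; [:: 5; 2; 1; 0;
      3; 2; 1; 4; 3; 2; 5; 2; 1; 0; 3; 2; 1; 4; 3; 2; 5]; [::]; [:: 2]; [:: 3]; [:: 4]; [::];
      [::]]);
  ([:: 0; 6; 3],
   [:: [:: 5]; [::]; [::]; [::]; [::]; [:: 4]; [:: 2]; [:: 5; 2; 1; 0; 3; 2; 1; 4; 3; 2; 5; 2;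
      1; 0; 3; 2; 1; 4; 3; 2; 5]]);
  ([:: 7; 1; 2],
   [:: [:: 0; 5; 2; 1; 0; 3; 2; 1; 4; 3; 2; 5; 2; 1; 0; 3; 2; 1; 4; 3; 2; 5]; [:: 1]; [::];
      [::]; [:: 3]; [:: 4]; [:: 5]; [:: 0]]);
  ([:: 0; 1; 2; 3],
   [:: [:: 0]; [:: 1]; [:: 2]; [::]; [::]; [:: 4]; [:: 0; 1; 2; 5; 2; 1; 0]; [::]]);
  ([:: 0; 1; 2; 6],
   [:: [::]; [:: 1]; [::]; [:: 0; 1; 2; 5; 2; 1; 0]; [:: 3]; [:: 4]; [::]; [::]]);
  ([:: 0; 1; 2; 7],
   [:: [:: 0; 5; 2; 1; 0; 3; 2; 1; 4; 3; 2; 5; 2; 1; 0; 3; 2; 1; 4; 3; 2; 5]; [::]; [::]; [::];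
      [:: 3]; [:: 4]; [::]; [::]]);
  ([:: 0; 1; 6; 0],
   [:: [::]; [:: 5]; [::]; [::]; [:: 3]; [:: 4]; [:: 0]; [:: 2; 1; 0; 3; 2; 1; 4; 3; 2; 5; 2;
      1; 0; 3; 2; 1; 4; 3; 2]]);
  ([:: 0; 1; 6; 3],
   [:: [::]; [::]; [:: 0; 1; 2; 5; 2; 1; 0]; [::]; [::]; [:: 4]; [:: 2]; [::]]);
  ([:: 0; 1; 6; 7],
   [:: [:: 2; 1; 0; 3; 2; 1; 4; 3; 2; 5; 2; 1; 0; 3; 2; 1; 4; 3; 2]; [:: 5; 2; 1; 0; 3; 2; 1;
      4; 3; 2; 5; 2; 1; 0; 3; 2; 1; 4; 3; 2; 5]; [::]; [::]; [:: 3]; [:: 4]; [::]; [::]]);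
  ([:: 0; 6; 3; 2],
   [:: [:: 5]; [:: 0; 1; 2; 5; 2; 1; 0]; [::]; [:: 1]; [::]; [:: 4]; [:: 2]; [:: 5; 2; 1; 0; 3;
      2; 1; 4; 3; 2; 5; 2; 1; 0; 3; 2; 1; 4; 3; 2; 5]]);
  ([:: 0; 6; 3; 4],
   [:: [:: 5]; [::]; [::]; [:: 3]; [::]; [::]; [:: 2]; [:: 5; 2; 1; 0; 3; 2; 1; 4; 3; 2; 5; 2;
      1; 0; 3; 2; 1; 4; 3; 2; 5]]);
  ([:: 7; 1; 2; 3],
   [:: [:: 0; 5; 2; 1; 0; 3; 2; 1; 4; 3; 2; 5; 2; 1; 0; 3; 2; 1; 4; 3; 2; 5]; [:: 1]; [:: 2];
      [::]; [::]; [:: 4]; [::]; [:: 0]]);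
  ([:: 0; 1; 2; 3; 4],
   [:: [:: 0]; [:: 1]; [:: 2]; [:: 3]; [::]; [::]; [:: 0; 1; 2; 5; 2; 1; 0]; [::]]);
  ([:: 0; 1; 2; 3; 7],
   [:: [:: 0; 5; 2; 1; 0; 3; 2; 1; 4; 3; 2; 5; 2; 1; 0; 3; 2; 1; 4; 3; 2; 5]; [::]; [:: 2];
      [::]; [::]; [:: 4]; [:: 0; 1; 2; 5; 2; 1; 0]; [::]]);
  ([:: 0; 1; 2; 6; 0],
   [:: [::]; [::]; [::]; [:: 0; 1; 2; 5; 2; 1; 0]; [:: 3]; [:: 4]; [:: 0]; [:: 2; 1; 0; 3; 2;
      1; 4; 3; 2; 5; 2; 1; 0; 3; 2; 1; 4; 3; 2]]);
  ([:: 0; 1; 2; 6; 7],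
   [:: [:: 2; 1; 0; 3; 2; 1; 4; 3; 2; 5; 2; 1; 0; 3; 2; 1; 4; 3; 2]; [::]; [::]; [:: 0; 1; 2;
      5; 2; 1; 0]; [:: 3]; [:: 4]; [::]; [::]]);
  ([:: 0; 1; 2; 7; 1],
   [:: [:: 0; 1; 0]; [::]; [:: 5; 2; 1; 0; 3; 2; 1; 4; 3; 2; 5; 2; 1; 0; 3; 2; 1; 4; 3; 2; 5];
      [::]; [:: 3]; [:: 4]; [::]; [:: 1]]);
  ([:: 0; 1; 6; 0; 3],
   [:: [::]; [:: 5]; [:: 0; 1; 2; 5; 2; 1; 0]; [::]; [::]; [:: 4]; [::]; [:: 2; 1; 0; 3; 2; 1;
      4; 3; 2; 5; 2; 1; 0; 3; 2; 1; 4; 3; 2]]);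
  ([:: 0; 1; 6; 3; 4],
   [:: [::]; [::]; [:: 0; 1; 2; 5; 2; 1; 0]; [:: 3]; [::]; [::]; [:: 2]; [::]]);
  ([:: 0; 1; 6; 3; 7],
   [:: [:: 2; 1; 0; 3; 2; 1; 4; 3; 2; 5; 2; 1; 0; 3; 2; 1; 4; 3; 2]; [:: 5; 2; 1; 0; 3; 2; 1;
      4; 3; 2; 5; 2; 1; 0; 3; 2; 1; 4; 3; 2; 5]; [:: 0; 1; 2; 5; 2; 1; 0]; [::]; [::]; [:: 4];
      [:: 2]; [::]]);
  ([:: 0; 6; 3; 2; 4],
   [:: [:: 5]; [:: 0; 1; 2; 5; 2; 1; 0]; [::]; [::]; [::]; [::]; [:: 2]; [:: 5; 2; 1; 0; 3; 2;
      1; 4; 3; 2; 5; 2; 1; 0; 3; 2; 1; 4; 3; 2; 5]]);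
  ([:: 0; 6; 3; 4; 5],
   [:: [:: 5]; [::]; [::]; [:: 3]; [:: 4]; [::]; [:: 2]; [:: 5; 2; 1; 0; 3; 2; 1; 4; 3; 2; 5;
      2; 1; 0; 3; 2; 1; 4; 3; 2; 5]]);
  ([:: 7; 1; 2; 3; 4],
   [:: [:: 0; 5; 2; 1; 0; 3; 2; 1; 4; 3; 2; 5; 2; 1; 0; 3; 2; 1; 4; 3; 2; 5]; [:: 1]; [:: 2];
      [:: 3]; [::]; [::]; [::]; [:: 0]]);
  ([:: 7; 1; 2; 3; 6],
   [:: [:: 0; 3; 2; 1; 4; 3; 2; 5; 2; 1; 0; 3; 2; 4; 3]; [:: 1]; [:: 2]; [:: 5]; [::]; [:: 4];
      [::]; [:: 0]]);
  ([:: 0; 1; 2; 3; 4; 5],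
   [:: [:: 0]; [:: 1]; [:: 2]; [:: 3]; [:: 4]; [::]; [:: 0; 1; 2; 5; 2; 1; 0]; [::]]);
  ([:: 0; 1; 2; 3; 4; 7],
   [:: [:: 0; 5; 2; 1; 0; 3; 2; 1; 4; 3; 2; 5; 2; 1; 0; 3; 2; 1; 4; 3; 2; 5]; [::]; [:: 2];
      [:: 3]; [::]; [::]; [:: 0; 1; 2; 5; 2; 1; 0]; [::]]);
  ([:: 0; 1; 2; 3; 7; 1],
   [:: [:: 0; 1; 0]; [::]; [::]; [::]; [::]; [:: 4]; [:: 0; 1; 2; 5; 2; 1; 0]; [:: 1]]);
  ([:: 0; 1; 2; 6; 0; 1],
   [:: [:: 1]; [::]; [:: 5]; [:: 0; 1; 2; 5; 2; 1; 0]; [:: 3]; [:: 4]; [:: 0]; [::]]);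
  ([:: 0; 1; 2; 6; 7; 1],
   [:: [:: 1; 2; 1; 0; 3; 2; 1; 4; 3; 2; 5; 2; 1; 0; 3; 2; 1; 4; 3; 2]; [::]; [:: 5; 2; 1; 0;
      3; 2; 1; 4; 3; 2; 5; 2; 1; 0; 3; 2; 1; 4; 3; 2; 5]; [:: 0; 1; 2; 5; 2; 1; 0]; [:: 3];
      [:: 4]; [::]; [:: 1]]);
  ([:: 0; 1; 6; 0; 3; 4],
   [:: [::]; [:: 5]; [:: 0; 1; 2; 5; 2; 1; 0]; [:: 3]; [::]; [::]; [::]; [:: 2; 1; 0; 3; 2; 1;
      4; 3; 2; 5; 2; 1; 0; 3; 2; 1; 4; 3; 2]]);
  ([:: 0; 1; 6; 0; 3; 6],
   [:: [:: 2]; [:: 5]; [:: 0; 1; 2; 5; 2; 1; 0]; [:: 0]; [::]; [:: 4]; [::]; [:: 2; 1; 0; 3; 2;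
      1; 4; 3; 2; 5; 2; 1; 0; 3; 2; 1; 4; 3; 2]]);
  ([:: 0; 1; 6; 3; 4; 5],
   [:: [::]; [::]; [:: 0; 1; 2; 5; 2; 1; 0]; [:: 3]; [:: 4]; [::]; [:: 2]; [::]]);
  ([:: 0; 1; 6; 3; 4; 7],
   [:: [:: 2; 1; 0; 3; 2; 1; 4; 3; 2; 5; 2; 1; 0; 3; 2; 1; 4; 3; 2]; [:: 5; 2; 1; 0; 3; 2; 1;
      4; 3; 2; 5; 2; 1; 0; 3; 2; 1; 4; 3; 2; 5]; [:: 0; 1; 2; 5; 2; 1; 0]; [:: 3]; [::]; [::];
      [:: 2]; [::]]);
  ([:: 0; 6; 3; 2; 4; 3],
   [:: [:: 5]; [:: 0; 1; 2; 5; 2; 1; 0]; [:: 3]; [::]; [:: 1]; [:: 5; 2; 1; 3; 2; 4; 3; 5; 2;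
      1; 0]; [:: 5; 2; 1; 3; 2; 4; 3; 5; 2; 1; 0]; [:: 5; 2; 1; 0; 3; 2; 1; 4; 3; 2; 5; 2; 1;
      0; 3; 2; 1; 4; 3; 2; 5]]);
  ([:: 0; 6; 3; 2; 4; 5],
   [:: [:: 5]; [:: 0; 1; 2; 5; 2; 1; 0]; [::]; [:: 5; 2; 1; 3; 2; 4; 3; 5; 2; 1; 0]; [:: 4];
      [::]; [:: 2]; [:: 5; 2; 1; 0; 3; 2; 1; 4; 3; 2; 5; 2; 1; 0; 3; 2; 1; 4; 3; 2; 5]]);
  ([:: 7; 1; 2; 3; 4; 5],
   [:: [:: 0; 5; 2; 1; 0; 3; 2; 1; 4; 3; 2; 5; 2; 1; 0; 3; 2; 1; 4; 3; 2; 5]; [:: 1]; [:: 2];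
      [:: 3]; [:: 4]; [::]; [:: 0; 1; 2; 3; 4; 5; 2; 1; 3; 2; 5]; [:: 0]]);
  ([:: 7; 1; 2; 3; 4; 6],
   [:: [:: 0; 3; 2; 1; 4; 3; 2; 5; 2; 1; 0; 3; 2; 4; 3]; [:: 1]; [:: 2]; [:: 0; 1; 2; 3; 4; 5;
      2; 1; 3; 2; 5]; [::]; [:: 0; 1; 2; 3; 4; 5; 2; 1; 3; 2; 5]; [::]; [:: 0]]);
  ([:: 0; 1; 2; 3; 4; 5; 7],
   [:: [:: 0; 5; 2; 1; 0; 3; 2; 1; 4; 3; 2; 5; 2; 1; 0; 3; 2; 1; 4; 3; 2; 5]; [::]; [:: 2];
      [:: 3]; [:: 4]; [::]; [:: 0; 1; 2; 5; 2; 1; 0]; [::]]);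
  ([:: 0; 1; 2; 3; 4; 7; 1],
   [:: [:: 0; 1; 0]; [::]; [::]; [:: 3]; [::]; [::]; [:: 0; 1; 2; 5; 2; 1; 0]; [:: 1]]);
  ([:: 0; 1; 2; 3; 7; 1; 2],
   [:: [:: 0; 1; 0]; [:: 2]; [::]; [:: 5; 2; 1; 0; 3; 2; 1; 4; 3; 2; 5; 2; 1; 0; 3; 2; 1; 4; 3;
      2; 5]; [::]; [:: 4]; [:: 0; 1; 2; 5; 2; 1; 0]; [:: 1]]);
  ([:: 0; 1; 2; 6; 0; 1; 7],
   [:: [:: 1; 2; 1; 0; 3; 2; 1; 4; 3; 2; 5; 2; 1; 0; 3; 2; 1; 4; 3; 2]; [:: 2; 1; 0; 3; 2; 1;
      4; 3; 2; 5; 2; 1; 0; 3; 2; 1; 4; 3; 2]; [:: 5]; [:: 0; 1; 2; 5; 2; 1; 0]; [:: 3]; [:: 4];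
      [:: 0]; [::]]);
  ([:: 0; 1; 6; 0; 3; 4; 5],
   [:: [::]; [:: 5]; [:: 0; 1; 2; 5; 2; 1; 0]; [:: 3]; [:: 4]; [::]; [::]; [:: 2; 1; 0; 3; 2;
      1; 4; 3; 2; 5; 2; 1; 0; 3; 2; 1; 4; 3; 2]]);
  ([:: 0; 1; 6; 0; 3; 4; 6],
   [:: [:: 2]; [:: 5]; [:: 0; 1; 2; 5; 2; 1; 0]; [::]; [::]; [::]; [::]; [:: 2; 1; 0; 3; 2; 1;
      4; 3; 2; 5; 2; 1; 0; 3; 2; 1; 4; 3; 2]]);
  ([:: 0; 1; 6; 3; 4; 5; 7],
   [:: [:: 2; 1; 0; 3; 2; 1; 4; 3; 2; 5; 2; 1; 0; 3; 2; 1; 4; 3; 2]; [:: 5; 2; 1; 0; 3; 2; 1;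
      4; 3; 2; 5; 2; 1; 0; 3; 2; 1; 4; 3; 2; 5]; [:: 0; 1; 2; 5; 2; 1; 0]; [:: 3]; [:: 4];
      [::]; [:: 2]; [::]]);
  ([:: 0; 1; 2; 3; 4; 5; 7; 1],
   [:: [:: 0; 1; 0]; [::]; [:: 1; 0; 2; 1; 0; 3; 4; 3; 5; 2; 1; 0; 3; 2; 1; 5; 2; 3; 4];
      [:: 3]; [:: 4]; [::]; [:: 0; 1; 2; 5; 2; 1; 0]; [:: 1]]);
  ([:: 0; 1; 2; 3; 4; 7; 1; 2],
   [:: [:: 0; 1; 0]; [:: 2]; [::]; [:: 1; 0; 2; 1; 0; 3; 4; 3; 5; 2; 1; 0; 3; 2; 1; 5; 2; 3;
      4]; [::]; [:: 1; 0; 2; 1; 0; 3; 4; 3; 5; 2; 1; 0; 3; 2; 1; 5; 2; 3; 4]; [:: 0; 1; 2; 5;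
      2; 1; 0]; [:: 1]]);
  ([:: 0; 1; 6; 0; 3; 4; 5; 6],
   [:: [:: 2]; [:: 5]; [:: 0; 1; 2; 5; 2; 1; 0]; [:: 0; 2; 4; 3; 2; 1; 0; 5; 2; 1; 0; 3; 2; 1;
      4; 3; 5; 2; 1]; [:: 4]; [::]; [::]; [:: 2; 1; 0; 3; 2; 1; 4; 3; 2; 5; 2; 1; 0; 3; 2; 1;
      4; 3; 2]]);
  ([:: 0; 1; 6; 0; 3; 4; 6; 3],
   [:: [:: 2]; [:: 5]; [:: 0; 2; 4; 3; 2; 1; 0; 5; 2; 1; 0; 3; 2; 1; 4; 3; 5; 2; 1]; [::];
      [:: 0]; [:: 0; 2; 4; 3; 2; 1; 0; 5; 2; 1; 0; 3; 2; 1; 4; 3; 5; 2; 1]; [:: 3]; [:: 2; 1;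
      0; 3; 2; 1; 4; 3; 2; 5; 2; 1; 0; 3; 2; 1; 4; 3; 2]])].

Definition rep_entries : seq (qmx * seq (seq nat)) :=
  [seq (qword 8 Hq r.1, r.2) | r <- rep_table].
Definition reps_q : seq qmx := unzip1 rep_entries.
Definition reps : seq M8 := map (mxq 8 8) reps_q.

Lemma reps_schreier :
  all (fun e => all2 (fun A w => qmul 8 8 8 (qword 8 Gq (rev w)) (qmul 8 8 8 e.1 A) \in reps_q)
    Hq e.2) rep_entries.
Proof. by vm_compute. Qed.

Lemma reps_closed : {in reps & map (mxq 8 8) Hq, forall r h,
  exists2 r', r' \in reps & exists2 g, inG g & r *m h = g *m r'}.
Proof.
move=> _ _ /mapP[_ /mapP[e rep_e ->] ->] /mapP[A Hq_A ->].
have [w reps_R] := all2_meml (allP reps_schreier e rep_e) Hq_A.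
exists (mxq 8 8 (qmul 8 8 8 (qword 8 Gq (rev w)) (qmul 8 8 8 e.1 A))).
  exact: map_f.
exists (mxq 8 8 (qword 8 Gq w)); first by rewrite inGE; apply: gen_qword.
by rewrite -!mxqM mulmxA -{1}(revK w) mxq_qword_rev ?mul1mx ?involutions_Gq.
Qed.

Lemma one_in_reps : 1%:M \in reps.
Proof. by rewrite -mxq1 map_f //; vm_compute. Qed.

Lemma inH_transversal x : inH x -> exists2 r, r \in reps & exists2 g, inG g & x = g *m r.
Proof.
have := reps_closed; rewrite inGE => closed /inHE.
exact: (gen_transversal (qinvolutionsP involutions_Hq) one_in_reps closed (x := x)).
Qed.

Lemma reps_row_stab : all (fun R => (qrow R == qrow (qid 8)) ==> (R == qid 8)) reps_q.
Proof. by vm_compute. Qed.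

Lemma inH_row_stab x : inH x -> row (inord 1) x = row (inord 1) 1%:M -> inG x.
Proof.
case/inH_transversal => _ /mapP[R reps_R ->] [g G_g ->].
rewrite row_inG // -mxq1 => /qrow_inj/eqP/(implyP (allP reps_row_stab R reps_R))/eqP->.
by rewrite mxq1 mulmx1.
Qed.

Lemma inH_row_coset x y : inH x -> inH y ->
  row (inord 1) x = row (inord 1) y -> exists2 g, inG g & y = g *m x.
Proof.
move=> H_x H_y xy; have inv_H := qinvolutionsP involutions_Hq.
have [x' H_x' x'x] := gen_left_inverse inv_H (proj1 (inHE x) H_x).
exists (y *m x'); last by rewrite -mulmxA x'x mulmx1.
apply: inH_row_stab; first by apply/inHE/gen_mulmx => //; apply/inHE.
by rewrite row_mul -xy -row_mul (mulmx1C x'x).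
Qed.

Lemma reps_labelled : all (fun R => has (fun t => qrow R == label_row t) labels) reps_q.
Proof. by vm_compute. Qed.

Lemma labels_represented : all (fun t => has (fun R => qrow R == label_row t) reps_q) labels.
Proof. by vm_compute. Qed.

Lemma inH_label x : inH x -> exists2 t, t \in labels & row (inord 1) x = label_mx t.
Proof.
case/inH_transversal => _ /mapP[R reps_R ->] [g G_g ->].
have /hasP[t lab_t /eqP Rt] := allP reps_labelled R reps_R.
by exists t; rewrite // row_inG // row_mxq Rt.
Qed.

Lemma label_represented t : t \in labels -> exists2 x, inH x & row (inord 1) x = label_mx t.
Proof.
move=> /(allP labels_represented)/hasP[_ /mapP[_ /mapP[r _ ->] ->] /eqP Rt].
exists (mxq 8 8 (qword 8 Hq r.1)); last by rewrite row_mxq Rt.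
by apply/inHE/gen_qword.
Qed.

(** * The Q-orbits on the labels *)

Definition label_class (t : label) : nat := orbit_class t.1.1 t.1.2 t.2.

Definition qvmul (r : seq rat) (A : qmx) : seq rat := head [::] (qmul 1 8 8 [:: r] A).

Lemma label_mx_mul t A : label_mx t *m mxq 8 8 A = mxq 1 8 [:: qvmul (label_row t) A].
Proof. by rewrite /label_mx mxqM. Qed.

Lemma Q_preserves_classes_q : all (fun t => all (fun A => let r := qvmul (label_row t) A in
  has (fun t' => (r == label_row t') && (label_class t' == label_class t)) labels) Qq) labels.
Proof. by vm_compute. Qed.

Lemma inQ_label_class q : inQ q -> {in labels, forall t, exists t',
  [/\ t' \in labels, label_class t' = label_class t & label_mx t *m q = label_mx t']}.
Proof.
rewrite inQE; move: q; apply: gen_ind_involutions_r; first exact: qinvolutionsP involutions_Qq.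
  by move=> t lab_t; exists t; rewrite mulmx1.
move=> q _ /mapP[A Qq_A ->] IH t /IH[t1 [lab_t1 class_t1 t_q]].
have /hasP[t2 lab_t2 /andP[/eqP t1A /eqP class_t2]] :=
  allP (allP Q_preserves_classes_q t1 lab_t1) A Qq_A.
by exists t2; rewrite mulmxA t_q label_mx_mul t1A class_t2.
Qed.

Definition class_base (c : nat) : label :=
  nth (false, 0, 0)%N labels (find (fun t => label_class t == c) labels).

Definition Q_orbit (t : label) : seq (seq rat) :=
  saturate (fun r => [seq qvmul r A | A <- Qq]) 56 [:: label_row t].

Lemma Q_orbits_q : all (fun c => let O := Q_orbit (class_base c) in
  all (fun t => (label_class t == c) ==> (label_row t \in O)) labels) [:: 1; 2; 3]%N.
Proof. by vm_compute. Qed.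

Lemma Q_label_orbit t : t \in labels ->
  exists2 q, inQ q & label_mx (class_base (label_class t)) *m q = label_mx t.
Proof.
move=> lab_t; have class123 : label_class t \in [:: 1; 2; 3]%N.
  by rewrite /label_class /orbit_class; case: ifP => //; case: ifP.
have /allP/(_ t lab_t) := allP Q_orbits_q _ class123; rewrite eqxx /=.
pose P r := exists2 q, inQ q & label_mx (class_base (label_class t)) *m q = mxq 1 8 [:: r].
apply: (saturate_ind (P := P)) => [r|r _ [q Q_q base_q] /mapP[A Qq_A ->]].
  by rewrite inE => /eqP->; exists 1%:M; [rewrite inQE; apply: gen_one | rewrite mulmx1].
exists (q *m mxq 8 8 A); first by rewrite inQE in Q_q *; apply/gen_mulmx/gen_mem/map_f.
by rewrite mulmxA base_q mxqM.
Qed.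

Lemma Q_transitive_on_classes t t' : t \in labels -> t' \in labels ->
  label_class t = label_class t' -> exists2 q, inQ q & label_mx t *m q = label_mx t'.
Proof.
move=> /Q_label_orbit[q1 Q_q1 base_q1] /Q_label_orbit[q2 Q_q2 base_q2] same_class.
rewrite inQE in Q_q1 Q_q2; have inv_Q := qinvolutionsP involutions_Qq.
have [y Q_y /mulmx1C q1y] := gen_left_inverse inv_Q Q_q1.
exists (y *m q2); first by rewrite inQE; apply: gen_mulmx.
by rewrite -base_q1 -!mulmxA (mulmxA q1) q1y mul1mx same_class.
Qed.

Lemma inH_coset_label alpha :
  inH alpha -> exists sgn i j, valid_label i j /\ coset_entry alpha (labf sgn i j).
Proof.
case/inH_label => [[[sgn i] j] lab_t row_t]; exists sgn, i, j; split.
  by rewrite /valid_label -(mem_labels sgn).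
exact: coset_entry_label row_t.
Qed.

Lemma coset_label_represented sgn i j :
  valid_label i j -> exists alpha, inH alpha /\ coset_entry alpha (labf sgn i j).
Proof.
rewrite /valid_label -(mem_labels sgn) => /label_represented[x H_x row_x].
by exists x; split; last exact: coset_entry_label row_x.
Qed.

Lemma inH_coset_entry_row alpha t : inH alpha -> t \in labels ->
  coset_entry alpha (labft t) -> row (inord 1) alpha = label_mx t.
Proof.
move=> /inH_label[t0 lab_t0 row_t0] lab_t et.
by rewrite row_t0 (coset_entry_labels_inj lab_t0 lab_t _ et) //; apply: coset_entry_label.
Qed.

Lemma Q_orbits_on_cosets alpha beta sgn i j sgn' i' j' :
    inH alpha -> inH beta -> valid_label i j -> valid_label i' j' ->
    coset_entry alpha (labf sgn i j) -> coset_entry beta (labf sgn' i' j') ->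
  (exists q, inQ q /\ same_coset (alpha *m q) beta) <->
  orbit_class sgn i j = orbit_class sgn' i' j'.
Proof.
rewrite /valid_label -(mem_labels sgn) -(mem_labels sgn') => H_a H_b lab_t lab_t'.
move=> /(inH_coset_entry_row H_a lab_t) row_a /(inH_coset_entry_row H_b lab_t') row_b.
split=> [[q [Q_q [g [G_g beta_gaq]]]]|same_class].
  have [t1 [lab_t1 class_t1 tq]] := inQ_label_class Q_q lab_t.
  have row_b1 : row (inord 1) beta = label_mx t1 by rewrite beta_gaq row_inG // row_mul row_a.
  have t1_t' :=
    coset_entry_labels_inj lab_t1 lab_t' (coset_entry_label row_b1) (coset_entry_label row_b).
  by rewrite -[orbit_class sgn i j]/(label_class (sgn, i, j)) -class_t1 t1_t'.
have [q Q_q tq] := Q_transitive_on_classes lab_t lab_t' same_class.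
have H_aq : inH (alpha *m q) by apply/inHE/gen_mulmx; apply/inHE => //; apply: inQ_inH.
have rows : row (inord 1) (alpha *m q) = row (inord 1) beta by rewrite row_mul row_a tq row_b.
by have [g G_g beta_g] := inH_row_coset H_aq H_b rows; exists q; split => //; exists g.
Qed.

Theorem proposition5p3 :
  (* (a) Q is isomorphic to H1 via m with m(s_k) = a_{6-k}, m(s_3') = a_1' *)
  (exists m : M8 -> M7,
      (forall x y, inQ x -> inQ y -> m (x *m y) = m x *m m y) /\
      (forall x y, inQ x -> inQ y -> m x = m y -> x = y) /\
      (forall z, inH1 z <-> exists x, inQ x /\ m x = z) /\
      m s1 = a5 /\ m s2 = a4 /\ m s3 = a3 /\ m s4 = a2 /\ m s5 = a1 /\
      m s3' = a1') /\
  (* (b) the right action of Q on the cosets G\alpha has exactly the three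
     orbits O_1, O_2, O_3 *)
  ((forall alpha, inH alpha ->
      exists sgn i j, valid_label i j /\ coset_entry alpha (labf sgn i j)) /\
   (forall sgn i j, valid_label i j ->
      exists alpha, inH alpha /\ coset_entry alpha (labf sgn i j)) /\
   (forall alpha beta sgn i j sgn' i' j',
      inH alpha -> inH beta -> valid_label i j -> valid_label i' j' ->
      coset_entry alpha (labf sgn i j) -> coset_entry beta (labf sgn' i' j') ->
      ((exists q, inQ q /\ same_coset (alpha *m q) beta) <->
       orbit_class sgn i j = orbit_class sgn' i' j'))).
Proof.
split.
  exists restrQ; split; first exact: restrQM.
  split; first exact: restrQ_inj.
  split; first exact: restrQ_image.
  by have /= [-> -> -> -> -> ->] := restrQ_generators.
split; first exact: inH_coset_label.
split; first exact: coset_label_represented.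
exact: Q_orbits_on_cosets.
Qed.
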